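(* Let $P_i$ denote the Legendre polynomials and $L_i=\sqrt{\tfrac{2}{2i+1}}\,P_i$. There does not exist a family $\{\Delta_n\}_{n=0}^{\infty}$ of functions on $(-1,1)$ such that each $\Delta_n$ is continuous on $(-1,1)$, each $\Delta_n$ is equal at every point of $(-1,1)$ to the sum of its Fourier–Legendre series $\sum_{i=0}^{\infty}\alpha_i^n L_i(x)$ with $\alpha_i^n=\int_{-1}^{1}\Delta_n(x)L_i(x)\,dx$, and \[ \int_{-1}^{1} x^{k}\,\Delta_n(x)\,dx=\delta_{k,n}\qquad\text{for all }k,n\in\mathbb{N}_0 . \]
   Context: $\delta_{k,n}$ is the Kronecker delta. The functions $\Delta_n$ in the claim are called ''delta functions'' for the raw-moment functionals $f\mapsto\int_{-1}^{1}x^k f(x)\,dx$. *)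

From Stdlib Require Import Reals.
From Coquelicot Require Import Coquelicot.
Open Scope R_scope.

(* leg_pair n x = (P_n x, P_(n+1) x), via Bonnet's recurrence
   (m+2) P_(m+2) = (2m+3) x P_(m+1) - (m+1) P_m,  P_0 = 1, P_1 = x. *)
Fixpoint leg_pair (n : nat) (x : R) : R * R :=
  match n with
  | O => (1, x)
  | S m => let (p, q) := leg_pair m x in
           (q, ((2 * INR m + 3) * x * q - (INR m + 1) * p) / (INR m + 2))
  end.

Definition legendre (n : nat) (x : R) : R := fst (leg_pair n x).

Definition legendreL (n : nat) (x : R) : R :=
  sqrt (2 / (2 * INR n + 1)) * legendre n x.

Definition kdelta (k n : nat) : R := if Nat.eqb k n then 1 else 0.

(** Apply the moment conditions to Delta_2.  Bonnet's recurrence expresses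
    x^k P_(n+2) through x^(k+1) P_(n+1) and x^k P_n, so the moments of Delta_2
    determine every integral of x^k P_n Delta_2: the functional
    f |-> int f Delta_2 picks the coefficient of x^2, and the coefficient of
    x^2 in P_n is -n(n+1)/2 P_n(0).  Hence the n-th term of the Fourier-Legendre
    series of Delta_2 at x = 0 is -n(n+1)/(2n+1) P_n(0)^2.  Since P_(2m)(0)^2
    decays only like 1/m, these terms stay above 1/4 in absolute value along
    the even indices, so the series cannot converge at 0. *)

From Stdlib Require Import Reals Lra Lia FunctionalExtensionality.
From Coquelicot Require Import Coquelicot.
Open Scope R_scope.

Lemma nat_pair_ind (P : nat -> Prop) :
  P 0%nat -> P 1%nat -> (forall n, P n -> P (S n) -> P (S (S n))) -> forall n, P n.
Proof.
  intros H0 H1 HSS n.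
  enough (P n /\ P (S n)) by tauto.
  induction n as [|n [IHn IHSn]]; auto.
Qed.

Lemma legendre_SS n x :
  legendre (S (S n)) x =
  ((2 * INR n + 3) * x * legendre (S n) x - (INR n + 1) * legendre n x) / (INR n + 2).
Proof. unfold legendre; simpl; destruct (leg_pair n x); reflexivity. Qed.

Lemma legendre_SS_at0 n :
  legendre (S (S n)) 0 = - (INR n + 1) * legendre n 0 / (INR n + 2).
Proof. rewrite legendre_SS; field; pose proof (pos_INR n); lra. Qed.

Lemma legendre_even_at0_sqr_lb m :
  1 <= 4 * (INR m + 1) * legendre (2 * m + 2) 0 ^ 2.
Proof.
  induction m as [|m IHm].
  - change (2 * 0 + 2)%nat with 2%nat; rewrite legendre_SS_at0; unfold legendre; simpl; lra.
  - replace (2 * S m + 2)%nat with (S (S (2 * m + 2))) by lia.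
    rewrite legendre_SS_at0, S_INR.
    replace (INR (2 * m + 2)) with (2 * INR m + 2) by (rewrite plus_INR, mult_INR; simpl; ring).
    set (a := legendre (2 * m + 2) 0) in *.
    pose proof (pos_INR m).
    (* (2m+3)^2 = 4(m+1)(m+2) + 1 *)
    replace (4 * (INR m + 1 + 1) * (- (2 * INR m + 2 + 1) * a / (2 * INR m + 2 + 2)) ^ 2)
      with (4 * (INR m + 1) * a ^ 2 + a ^ 2 / (INR m + 2)) by (field; lra).
    assert (0 <= a ^ 2 / (INR m + 2)) by (apply Rdiv_le_0_compat; [apply pow2_ge_0 | lra]).
    lra.
Qed.

Lemma is_RInt_gen_ext_fun (F G : (R -> Prop) -> Prop) (f g : R -> R) (l : R) :
  (forall x, f x = g x) -> is_RInt_gen f F G l -> is_RInt_gen g F G l.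
Proof.
  intros Efg.
  now replace g with f by (apply functional_extensionality; exact Efg).
Qed.

Lemma is_RInt_gen_lin_comb (F G : (R -> Prop) -> Prop) {FF : Filter F} {FG : Filter G}
    (f g : R -> R) (lf lg a b c : R) :
  is_RInt_gen f F G lf -> is_RInt_gen g F G lg ->
  is_RInt_gen (fun x => (a * f x - b * g x) / c) F G ((a * lf - b * lg) / c).
Proof.
  intros Hf Hg.
  pose proof (is_RInt_gen_scal _ (/ c) _
    (is_RInt_gen_minus _ _ _ _ (is_RInt_gen_scal _ a _ Hf) (is_RInt_gen_scal _ b _ Hg)))
    as Hlin.
  unfold scal, minus, plus, opp in Hlin; simpl in Hlin; unfold mult in Hlin; simpl in Hlin.
  replace ((a * lf - b * lg) / c) with (/ c * (a * lf + - (b * lg))) by (unfold Rdiv; ring).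
  refine (is_RInt_gen_ext_fun _ _ _ _ _ _ Hlin).
  intros x; unfold Rdiv; ring.
Qed.

Lemma is_RInt_gen_open_unique (f : R -> R) (a b l1 l2 : R) :
  is_RInt_gen f (at_right a) (at_left b) l1 ->
  is_RInt_gen f (at_right a) (at_left b) l2 -> l1 = l2.
Proof.
  intros H1 H2.
  now rewrite <- (is_RInt_gen_unique f l1 H1), <- (is_RInt_gen_unique f l2 H2).
Qed.

(* [legendre_moment mu n k] is the value at x^k P_n of the linear functional
   on polynomials whose moments are [mu]. *)
Fixpoint legendre_moment_pair (mu : nat -> R) (n : nat) : (nat -> R) * (nat -> R) :=
  match n with
  | O => (mu, fun k => mu (S k))
  | S m => let (a, b) := legendre_moment_pair mu m in
           (b, fun k => ((2 * INR m + 3) * b (S k) - (INR m + 1) * a k) / (INR m + 2))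
  end.

Definition legendre_moment (mu : nat -> R) (n : nat) : nat -> R :=
  fst (legendre_moment_pair mu n).

Lemma legendre_moment_SS mu n k :
  legendre_moment mu (S (S n)) k =
  ((2 * INR n + 3) * legendre_moment mu (S n) (S k) - (INR n + 1) * legendre_moment mu n k)
  / (INR n + 2).
Proof. unfold legendre_moment; simpl; destruct (legendre_moment_pair mu n); reflexivity. Qed.

Lemma is_RInt_gen_legendre_moment (F G : (R -> Prop) -> Prop) {FF : Filter F} {FG : Filter G}
    (D : R -> R) (mu : nat -> R) :
  (forall k, is_RInt_gen (fun x => x ^ k * D x) F G (mu k)) ->
  forall n k, is_RInt_gen (fun x => x ^ k * legendre n x * D x) F G (legendre_moment mu n k).
Proof.
  intros Hmu n; induction n as [| |n IHn IHSn] using nat_pair_ind.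
  - intros k; refine (is_RInt_gen_ext_fun _ _ _ _ _ _ (Hmu k)).
    intros x; unfold legendre; simpl; ring.
  - intros k; refine (is_RInt_gen_ext_fun _ _ _ _ _ _ (Hmu (S k))).
    intros x; unfold legendre; simpl; ring.
  - intros k; rewrite legendre_moment_SS.
    refine (is_RInt_gen_ext_fun _ _ _ _ _ _
              (is_RInt_gen_lin_comb _ _ _ _ _ _ _ _ _ (IHSn (S k)) (IHn k))).
    intros x; rewrite legendre_SS; simpl (x ^ S k).
    field; pose proof (pos_INR n); lra.
Qed.

Lemma legendre_coefficient_moment (D : R -> R) (mu alpha : nat -> R) :
  (forall k, is_RInt_gen (fun x => x ^ k * D x) (at_right (-1)) (at_left 1) (mu k)) ->
  (forall n, is_RInt_gen (fun x => D x * legendreL n x) (at_right (-1)) (at_left 1) (alpha n)) ->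
  forall n, alpha n = sqrt (2 / (2 * INR n + 1)) * legendre_moment mu n 0.
Proof.
  intros Hmu Halpha n.
  apply (is_RInt_gen_open_unique _ _ _ _ _ (Halpha n)).
  pose proof (is_RInt_gen_legendre_moment _ _ D mu Hmu n 0) as Hmom.
  refine (is_RInt_gen_ext_fun _ _ _ _ _ _ (is_RInt_gen_scal _ _ _ Hmom)).
  intros x; unfold scal, legendreL; simpl; unfold mult; simpl; ring.
Qed.

(* For the moments [kdelta _ 2], [legendre_moment _ n k] is the coefficient of
   x^(2-k) in P_n. *)
Lemma legendre_moment_kdelta2 n :
  legendre_moment (fun k => kdelta k 2) n 0 = - (INR n * (INR n + 1)) / 2 * legendre n 0 /\
  legendre_moment (fun k => kdelta k 2) n 1 = - (INR n + 1) * legendre (S n) 0 /\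
  legendre_moment (fun k => kdelta k 2) n 2 = legendre n 0 /\
  (forall k, (3 <= k)%nat -> legendre_moment (fun k => kdelta k 2) n k = 0).
Proof.
  induction n as [| |n [A0 [A1 [A2 A3]]] [B0 [B1 [B2 B3]]]] using nat_pair_ind.
  - repeat split; try (intros [|[|[|k]]] Hk; [lia.. | reflexivity]);
      unfold legendre_moment, legendre, kdelta; simpl; field.
  - repeat split; try (intros [|[|[|k]]] Hk; [lia.. | reflexivity]);
      unfold legendre_moment, legendre, kdelta; simpl; field.
  - pose proof (pos_INR n).
    repeat split.
    + rewrite legendre_moment_SS, B1, A0, legendre_SS_at0, !S_INR; field; lra.
    + rewrite legendre_moment_SS, B2, A1, (legendre_SS_at0 (S n)), !S_INR; field; lra.
    + rewrite legendre_moment_SS, B3, A2, legendre_SS_at0 by lia; field; lra.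
    + intros k Hk; rewrite legendre_moment_SS, B3, A3 by lia; field; lra.
Qed.

Lemma kdelta2_series_term_at0 n :
  sqrt (2 / (2 * INR n + 1)) * legendre_moment (fun k => kdelta k 2) n 0 * legendreL n 0 =
  - (INR n * (INR n + 1) / (2 * INR n + 1)) * legendre n 0 ^ 2.
Proof.
  destruct (legendre_moment_kdelta2 n) as [-> _]; unfold legendreL.
  pose proof (pos_INR n).
  set (s := sqrt (2 / (2 * INR n + 1))).
  assert (Hss : s * s = 2 / (2 * INR n + 1))
    by (apply sqrt_sqrt, Rdiv_le_0_compat; lra).
  replace (s * (- (INR n * (INR n + 1)) / 2 * legendre n 0) * (s * legendre n 0))
    with (s * s * (- (INR n * (INR n + 1)) / 2 * legendre n 0 ^ 2)) by ring.
  rewrite Hss; field; lra.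
Qed.

Lemma Rabs_legendre_even_term_at0_ge m :
  1 / 4 <= Rabs (- (INR (2 * m + 2) * (INR (2 * m + 2) + 1) / (2 * INR (2 * m + 2) + 1))
                 * legendre (2 * m + 2) 0 ^ 2).
Proof.
  pose proof (legendre_even_at0_sqr_lb m) as Hlb.
  replace (INR (2 * m + 2)) with (2 * INR m + 2) by (rewrite plus_INR, mult_INR; simpl; ring).
  set (y := legendre (2 * m + 2) 0 ^ 2) in *.
  pose proof (pos_INR m).
  assert (0 <= y) by apply pow2_ge_0.
  replace (- ((2 * INR m + 2) * (2 * INR m + 2 + 1) / (2 * (2 * INR m + 2) + 1)) * y)
    with (- ((2 * INR m + 3) / (8 * INR m + 10) * (4 * (INR m + 1) * y))) by (field; lra).
  rewrite Rabs_Ropp, Rabs_pos_eq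
    by (apply Rmult_le_pos; [apply Rdiv_le_0_compat |]; nra).
  assert (1 / 4 <= (2 * INR m + 3) / (8 * INR m + 10))
    by (apply Rmult_le_reg_r with (8 * INR m + 10); [lra |]; field_simplify; lra).
  nra.
Qed.

Lemma not_ex_series_frequently_large (a : nat -> R) (c : R) :
  0 < c -> (forall N, exists n, (N <= n)%nat /\ c <= Rabs (a n)) -> ~ ex_series a.
Proof.
  intros Hc Hlarge Ha.
  apply ex_series_lim_0, is_lim_seq_spec in Ha.
  destruct (Ha (mkposreal c Hc)) as [N HN].
  destruct (Hlarge N) as [n [HNn Han]].
  specialize (HN n HNn); simpl in HN; rewrite Rminus_0_r in HN; lra.
Qed.

Theorem proposition1 :
  ~ exists (Delta : nat -> R -> R) (alpha : nat -> nat -> R),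
      (forall n x, -1 < x < 1 -> continuous (Delta n) x) /\
      (forall n i, is_RInt_gen (fun x => Delta n x * legendreL i x)
                     (at_right (-1)) (at_left 1) (alpha n i)) /\
      (forall n x, -1 < x < 1 ->
         is_series (fun i => alpha n i * legendreL i x) (Delta n x)) /\
      (forall k n, is_RInt_gen (fun x => x ^ k * Delta n x)
                     (at_right (-1)) (at_left 1) (kdelta k n)).
Proof.
  intros [Delta [alpha [_ [Hcoef [Hsum Hmom]]]]].
  assert (Hterm : forall i, alpha 2%nat i * legendreL i 0 =
            - (INR i * (INR i + 1) / (2 * INR i + 1)) * legendre i 0 ^ 2).
  { intros i.
    rewrite (legendre_coefficient_moment (Delta 2%nat) _ _ (fun k => Hmom k 2%nat) (Hcoef 2%nat)).
    apply kdelta2_series_term_at0. }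
  apply (not_ex_series_frequently_large (fun i => alpha 2%nat i * legendreL i 0) (1 / 4)).
  - lra.
  - intros N; exists (2 * N + 2)%nat; split; [lia |].
    rewrite Hterm; apply Rabs_legendre_even_term_at0_ge.
  - exists (Delta 2%nat 0); apply Hsum; lra.
Qed.
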